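(* There is an absolute constant $c_0 > 0$ such that the following holds. Let $\mathcal{U}$ be a finite set, $\mathbf{a} \in \mathbb{Z}_{\geq 0}^{\mathcal{U}}$ with $F_1 = \sum_{i \in \mathcal{U}} \mathbf{a}_i$, let $k > 0$, $\delta \in (0,1)$, and let $A \subseteq \mathcal{U}$ be such that $\mathbf{a}_i \leq F_1\delta/(2k^2)$ for all $i \in A$. Let $h \geq c_0 k$ be an integer and $f : \mathcal{U} \to [h]$ a pairwise-independent hash function. Then with probability at least $1-\delta$, \[ \forall j \in [h]:\quad \sum_{i \in A \cap f^{-1}(j)} \mathbf{a}_i \leq F_1/k . \]
   Context: $f$ is a pairwise-independent hash function if for each $i$, $f(i)$ is uniformly distributed on $[h] = \{1,\dots,h\}$ and for any distinct $i,i'$ the values $f(i), f(i')$ are independent. *)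

From mathcomp Require Import all_boot all_order all_algebra.
Set Implicit Arguments. Unset Strict Implicit. Unset Printing Implicit Defensive.
Import Order.TTheory GRing.Theory Num.Theory.
Local Open Scope ring_scope.

Definition is_distr (R : numDomainType) (T : finType) (p : T -> R) :=
  (forall w, 0 <= p w) /\ \sum_(w : T) p w = 1.

Definition prob (R : numDomainType) (T : finType) (p : T -> R) (E : pred T) : R :=
  \sum_(w : T | E w) p w.

(* A random hash function f : U -> [h] (here [h] is represented by 'I_h)
   is given by its law p, a distribution on the finite set of all functions
   U -> 'I_h. *)
Definition pairwise_indep_hash (R : numFieldType) (U : finType) (h : nat)
  (p : {ffun U -> 'I_h} -> R) :=
  [/\ is_distr p,
      (forall (i : U) (j : 'I_h), prob p (fun f => f i == j) = 1 / h%:R) &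
      (forall (i i' : U) (j j' : 'I_h), i != i' ->
         prob p (fun f => (f i == j) && (f i' == j')) =
         prob p (fun f => f i == j) * prob p (fun f => f i' == j'))].

(** The load of bucket [j] is [X_j = \sum_(i in A, f i = j) a_i], with mean
    [mu = S / h] where [S = \sum_(i in A) a_i <= F_1].  Pairwise independence
    gives the exact second moment
    [E[\sum_j (X_j - mu)^2] = (1 - 1/h) \sum_(i in A) a_i^2], which is at most
    [max_(i in A) a_i * F_1 <= delta t^2 / 2] for [t = F_1 / k].
    Since [h >= 4 k] we have [mu <= t / 4], so an overloaded bucket ([X_j > t])
    forces the sum of squared deviations above [(3 t / 4)^2]; Markov's inequality
    bounds the probability of this by [8 delta / 9]. *)

From mathcomp Require Import all_boot all_order all_algebra.
From mathcomp Require Import ring lra.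

Set Implicit Arguments.
Unset Strict Implicit.
Unset Printing Implicit Defensive.
Import Order.TTheory GRing.Theory Num.Theory.
Local Open Scope ring_scope.

Definition expect (R : numDomainType) (T : finType) (p : T -> R) (X : T -> R) : R :=
  \sum_w p w * X w.

Section Expectation.

Variables (R : numFieldType) (T : finType) (p : T -> R).
Hypothesis p_distr : is_distr p.

Lemma probE (E : pred T) : prob p E = expect p (fun w => (E w)%:R).
Proof.
rewrite /prob /expect big_mkcond; apply: eq_bigr => w _.
by case: (E w); rewrite ?mulr1 ?mulr0.
Qed.

Lemma probT (E : pred T) : (forall w, E w) -> prob p E = 1.
Proof.
by case: p_distr => _ <- ET; apply: eq_bigl => w; rewrite ET.
Qed.

Lemma prob_predC (E : pred T) : prob p (predC E) = 1 - prob p E.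
Proof.
case: p_distr => _ sum1; rewrite -sum1 /prob [X in _ = X - _](bigID E) /=.
by rewrite addrAC subrr add0r.
Qed.

Lemma expect_sub_const (X : T -> R) c : expect p (fun w => X w - c) = expect p X - c.
Proof.
case: p_distr => _ sum1.
by rewrite /expect (eq_bigr _ (fun w _ => mulrBr _ _ _)) sumrB -mulr_suml sum1 mul1r.
Qed.

Lemma markov (X : T -> R) (E : pred T) c :
  (forall w, 0 <= X w) -> (forall w, E w -> c <= X w) ->
  prob p E * c <= expect p X.
Proof.
case: p_distr => p_ge0 _ X_ge0 EX.
rewrite /prob /expect mulr_suml [X in _ <= X](bigID E) /= -[X in X <= _]addr0.
apply: lerD; last by apply: sumr_ge0 => w _; rewrite mulr_ge0.
by apply: ler_sum => w Ew; rewrite ler_wpM2l ?EX.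
Qed.

End Expectation.

Definition bucket_load (R : nmodType) (U : finType) (h : nat)
    (A : {set U}) (b : U -> R) (f : {ffun U -> 'I_h}) (j : 'I_h) : R :=
  \sum_(i in A | f i == j) b i.

Lemma bucket_load_le_sum (R : numDomainType) (U : finType) (h : nat)
    (A : {set U}) (b : U -> R) (f : {ffun U -> 'I_h}) j :
  (forall i, 0 <= b i) -> bucket_load A b f j <= \sum_(i in A) b i.
Proof.
move=> b_ge0; rewrite /bucket_load [X in _ <= X](bigID (fun i => f i == j)) /=.
by rewrite lerDl sumr_ge0.
Qed.

Section BucketLoads.

Variables (R : fieldType) (U : finType) (h : nat) (A : {set U}) (b : U -> R).

Lemma sum_bucket_load (f : {ffun U -> 'I_h}) :
  \sum_j bucket_load A b f j = \sum_(i in A) b i.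
Proof. by rewrite [RHS](partition_big (fun i => f i) xpredT). Qed.

Lemma sum_bucket_load_sqr (f : {ffun U -> 'I_h}) :
  \sum_j bucket_load A b f j ^+ 2 =
  \sum_(i in A) \sum_(i' in A) b i * b i' * (f i' == f i)%:R.
Proof.
rewrite [RHS](partition_big (fun i => f i) xpredT) //; apply: eq_bigr => j _.
rewrite expr2 mulr_suml; apply: eq_bigr => i /andP[_ /eqP ->].
rewrite mulr_sumr big_mkcondr /=; apply: eq_bigr => i' _.
by case: (f i' == j); rewrite ?mulr1 ?mulr0.
Qed.

(* No hypothesis [h > 0]: for [h = 0] both sides vanish, as [0^-1 = 0]. *)
Lemma sum_bucket_load_dev (f : {ffun U -> 'I_h}) :
  let S := \sum_(i in A) b i in
  \sum_j (bucket_load A b f j - S / h%:R) ^+ 2 =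
  \sum_j bucket_load A b f j ^+ 2 - S ^+ 2 / h%:R.
Proof.
move=> S; set mu := S / h%:R.
transitivity (\sum_j (bucket_load A b f j ^+ 2 - 2 * mu * bucket_load A b f j + mu ^+ 2)).
  by apply: eq_bigr => j _; ring.
rewrite big_split sumrB /= -mulr_sumr sum_bucket_load sumr_const card_ord /mu -/S.
have [->|hn] := eqVneq (h%:R : R) 0.
  by rewrite invr0 !mulr0 mul0r expr0n mul0rn subr0 addr0.
by rewrite -mulr_natl; field.
Qed.

End BucketLoads.

Section PairwiseIndependentHash.

Variables (R : numFieldType) (U : finType) (h : nat).
Variable p : {ffun U -> 'I_h} -> R.
Hypothesis p_hash : pairwise_indep_hash p.

Lemma prob_collision i i' :
  i != i' -> prob p (fun f => f i' == f i) = h%:R^-1.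
Proof.
case: p_hash => _ unif indep ii'.
rewrite /prob (partition_big (fun f : {ffun U -> 'I_h} => f i) xpredT) //=.
transitivity (\sum_(j < h) h%:R^-1 * h%:R^-1 : R).
  apply: eq_bigr => j _; rewrite -div1r -{1}(unif i j) -(unif i' j) -(indep _ _ _ _ ii').
  by apply: eq_bigl => f; case: (f i =P j) => [->|]; rewrite ?andbT ?andbF.
rewrite sumr_const card_ord -[_ / _ *+ h]mulr_natl mulrCA.
by have [->|hn] := eqVneq (h%:R : R) 0; rewrite ?invr0 ?mul0r // divff ?mulr1.
Qed.

Variables (A : {set U}) (b : U -> R).

Lemma expect_collisions :
  expect p (fun f => \sum_(i in A) \sum_(i' in A) b i * b i' * (f i' == f i)%:R) =
  (1 - h%:R^-1) * \sum_(i in A) b i ^+ 2 + (\sum_(i in A) b i) ^+ 2 / h%:R.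
Proof.
have p_distr : is_distr p by case: p_hash.
transitivity (\sum_(i in A) \sum_(i' in A) b i * b i' * prob p (fun f => f i' == f i)).
  rewrite /expect; under eq_bigr do rewrite mulr_sumr.
  rewrite exchange_big; apply: eq_bigr => i _.
  under eq_bigr do rewrite mulr_sumr.
  rewrite exchange_big; apply: eq_bigr => i' _.
  by rewrite probE // /expect mulr_sumr; apply: eq_bigr => f _; ring.
rewrite expr2 big_distrlr /= mulr_sumr mulr_suml -big_split /=.
apply: eq_bigr => i iA; rewrite (bigD1 i iA) [in RHS](bigD1 i iA) /=.
rewrite probT ?eqxx // [_ / h%:R]mulrDl mulr_suml.
rewrite (eq_bigr (fun i' => b i * b i' / h%:R)) => [|i' /andP[_ i'i]]; last first.
  by rewrite prob_collision // eq_sym.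
ring.
Qed.

Lemma expect_sum_bucket_load_dev :
  let mu := (\sum_(i in A) b i) / h%:R in
  expect p (fun f => \sum_j (bucket_load A b f j - mu) ^+ 2) =
  (1 - h%:R^-1) * \sum_(i in A) b i ^+ 2.
Proof.
have p_distr : is_distr p by case: p_hash.
rewrite /= (_ : expect p _ = expect p (fun f =>
    \sum_(i in A) \sum_(i' in A) b i * b i' * (f i' == f i)%:R
    - (\sum_(i in A) b i) ^+ 2 / h%:R)); last first.
  by apply: eq_bigr => f _; rewrite sum_bucket_load_dev sum_bucket_load_sqr.
by rewrite expect_sub_const // expect_collisions addrK.
Qed.

End PairwiseIndependentHash.

Lemma overload_dev_sqr (R : realFieldType) (h : nat) (x : 'I_h -> R) j mu t :
  0 <= mu <= t / 4 -> t < x j -> (3 / 4 * t) ^+ 2 <= \sum_j' (x j' - mu) ^+ 2.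
Proof.
move=> /andP[mu_ge0 mu_le] tx.
rewrite (bigD1 j) //= -[X in X <= _]addr0.
apply: lerD; last by apply: sumr_ge0 => j' _; apply: sqr_ge0.
by rewrite ler_sqr ?nnegrE; lra.
Qed.

Lemma prob_overload_le (R : realFieldType) (U : finType) (h : nat)
    (p : {ffun U -> 'I_h} -> R) (A : {set U}) (b : U -> R) (t : R) :
  pairwise_indep_hash p -> (forall i, 0 <= b i) ->
  (\sum_(i in A) b i) / h%:R <= t / 4 ->
  prob p (fun f => [exists j, t < bucket_load A b f j]) * (3 / 4 * t) ^+ 2
    <= \sum_(i in A) b i ^+ 2.
Proof.
move=> p_hash b_ge0 mu_le; have p_distr : is_distr p by case: p_hash.
set mu := _ / h%:R in mu_le.
have mu_ge0 : 0 <= mu by rewrite divr_ge0 ?sumr_ge0 ?ler0n.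
have dev_ge0 (f : {ffun U -> 'I_h}) : 0 <= \sum_j (bucket_load A b f j - mu) ^+ 2.
  by apply: sumr_ge0 => j _; apply: sqr_ge0.
apply: le_trans (markov p_distr dev_ge0 _) _.
  by move=> f /existsP[j]; apply: overload_dev_sqr; rewrite mu_ge0.
rewrite expect_sum_bucket_load_dev // ler_piMl ?gerBl ?invr_ge0 ?ler0n //.
by apply: sumr_ge0 => i _; apply: sqr_ge0.
Qed.

Lemma sum_sqr_le_mul (R : numDomainType) (I : finType) (P : pred I) (b : I -> R) M :
  (forall i, P i -> 0 <= b i <= M) -> \sum_(i | P i) b i ^+ 2 <= M * \sum_(i | P i) b i.
Proof.
move=> bM; rewrite mulr_sumr; apply: ler_sum => i Pi.
by have /andP[b_ge0 b_le] := bM i Pi; rewrite expr2 ler_wpM2r.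
Qed.

Lemma mean_le_quarter (R : realFieldType) (S F k h : R) :
  0 <= S <= F -> 0 < k -> 4 * k <= h -> S / h <= F / k / 4.
Proof.
move=> /andP[S_ge0 S_le_F] k_gt0 hk.
have h_gt0 : 0 < h by apply: lt_le_trans hk; rewrite mulr_gt0.
set y := F / k; have yk : y * k = F by rewrite divfK ?gt_eqF.
have y_ge0 : 0 <= y := divr_ge0 (le_trans S_ge0 S_le_F) (ltW k_gt0).
have := ler_wpM2l y_ge0 hk.
rewrite ler_pdivrMr //; nra.
Qed.

Theorem lemma7 :
  exists c0 : rat, 0 < c0 /\
  forall (R : realFieldType) (U : finType) (a : U -> nat) (k delta : R)
         (A : {set U}) (h : nat) (p : {ffun U -> 'I_h} -> R),
    0 < k -> 0 < delta < 1 ->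
    (forall i, i \in A ->
       (a i)%:R <= (\sum_(i0 : U) (a i0)%:R) * delta / (2 * k ^+ 2)) ->
    ratr c0 * k <= h%:R ->
    pairwise_indep_hash p ->
    1 - delta <=
      prob p (fun f => [forall j : 'I_h,
        (\sum_(i in A | f i == j) (a i)%:R) <= (\sum_(i0 : U) (a i0)%:R) / k]).
Proof.
exists 4%:R; split=> // R U a k delta A h p k_gt0 /andP[delta_gt0 delta_lt1] a_small.
rewrite ratr_nat => hk p_hash; have p_distr : is_distr p by case: p_hash.
set b := fun i => (a i)%:R : R; set F := \sum_i b i; set t := F / k.
have b_ge0 i : 0 <= b i by rewrite ler0n.
have S_le_F : \sum_(i in A) b i <= F by rewrite [F](bigID (mem A)) /= lerDl sumr_ge0.
have S_bounds : 0 <= \sum_(i in A) b i <= F by rewrite sumr_ge0.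
pose overload := fun f : {ffun U -> 'I_h} => [exists j, t < bucket_load A b f j].
rewrite (_ : prob p _ = 1 - prob p overload); last first.
  rewrite -prob_predC // /prob; apply: eq_bigl => f /=.
  by rewrite negb_exists; apply: eq_forallb => j; rewrite -leNgt.
rewrite lerD2l lerN2.
have [F0|F_neq0] := eqVneq F 0.
  have t_eq_F : t = F by rewrite /t F0 mul0r.
  rewrite /prob big_pred0 ?ltW // => f; apply/existsP => -[j].
  by rewrite t_eq_F ltNge (le_trans (bucket_load_le_sum A f j b_ge0)).
have F_gt0 : 0 < F by rewrite lt_def F_neq0 sumr_ge0.
have t_gt0 : 0 < t by rewrite divr_gt0.
have bad_le := prob_overload_le (t := t) p_hash b_ge0
  (mean_le_quarter S_bounds k_gt0 hk).
set M := F * delta / (2 * k ^+ 2) in a_small.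
have sum_sqr_le : \sum_(i in A) b i ^+ 2 <= delta / 2 * t ^+ 2.
  have -> : delta / 2 * t ^+ 2 = M * F by rewrite /M /t; field; rewrite gt_eqF.
  apply: le_trans (sum_sqr_le_mul _) (ler_wpM2l _ S_le_F) => [i iA|].
    by rewrite b_ge0 a_small.
  by rewrite /M divr_ge0 ?mulr_ge0 ?exprn_ge0 ?ltW.
have prob_ge0 : 0 <= prob p overload.
  by case: p_distr => p_ge0 _; apply: sumr_ge0.
have t2_gt0 : 0 < t ^+ 2 by rewrite exprn_gt0.
nra.
Qed.
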